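(* Let $T$ be a monad on $\mathsf{Set}$, let $X,Y$ be sets, let $\mu\in T(X)$ have formal presentation $(\Gamma,\langle x_i\rangle_{i\in[n]})$ with $\Gamma\in T([n])$, and let $f:X\to T(Y)$. For each $i\in[n]$ let $(\Delta_i,\langle y_{i,j}\rangle_{j\in[m_i]})$, with $\Delta_i\in T([m_i])$, be a formal presentation of $f(x_i)$. Then $\mu\mathrel{>\!\!>=} f$ has the formal presentation $(\Xi,\langle y_{i,j}\rangle_{i\in[n],\,j\in[m_i]})$, where $\Xi\in T([l])$, $l=\sum_{i\in[n]}m_i$, is the sequential composition of $\Gamma$ with the family $(\Delta_i)_{i\in[n]}$.
   Context: $[n]=\{1,\dots,n\}$ for $n\in\mathbb{N}$, $[\omega]=\mathbb{N}$; $\mathbb{N}\cup\{\omega\}$ indexes these sets and $[l]$ is identified (via a fixed bijection) with the disjoint union $\coprod_{i\in[n]}[m_i]$, so that sequences indexed by pairs $(i,j)$ with $j\in[m_i]$ are sequences indexed by $[l]$. For $\mu\in T(X)$ and $f:X\to T(Y)$, $\mu\mathrel{>\!\!>=} f$ is the Kleisli extension of $f$ applied to $\mu$. A formal presentation of $\mu\in T(X)$ is a pair $(\Gamma,x)$ with $\Gamma\in T([n])$ and $x:[n]\to X$ (a sequence $\langle x_i\rangle$) such that $\mu=T(x)(\Gamma)$. An $n$-ary algebraic operation is a family $\gamma_X:T(X)^n\to T(X)$ with $\gamma_X(\mu_1,\dots)\mathrel{>\!\!>=} f=\gamma_Y(\mu_1\mathrel{>\!\!>=} f,\dots)$ for all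 $f:X\to T(Y)$; generic effects $\Gamma\in T([n])$ correspond bijectively to $n$-ary algebraic operations via $\gamma_X(\mu_1,\dots,\mu_i,\dots)=\Gamma\mathrel{>\!\!>=}(i\mapsto\mu_i)$ and $\Gamma=\gamma_{[n]}(\eta(1),\dots,\eta(i),\dots)$. The sequential composition of $\Gamma\in T([n])$ (with operation $\gamma$) and $\Delta_i\in T([m_i])$ (with operations $\delta_i$) is the generic effect in $T([l])$ corresponding to the $l$-ary algebraic operation $T(Z)^{l}\cong\prod_{i\in[n]}T(Z)^{m_i}\xrightarrow{\langle\delta_i\rangle_i}T(Z)^n\xrightarrow{\gamma}T(Z)$. *)

(* a monad on Set is modelled as a Kleisli triple on Types. *)
Set Implicit Arguments.

Inductive arity : Type := Fin (n : nat) | Omega.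

(** [n] : an n-element set (for n finite), [ω] = N. *)
Definition idx (a : arity) : Type :=
  match a with Fin n => {k : nat | k < n} | Omega => nat end.

Record Monad : Type := {
  T :> Type -> Type;
  ret : forall X : Type, X -> T X;
  bind : forall X Y : Type, T X -> (X -> T Y) -> T Y;
  bind_ret_l : forall (X Y : Type) (x : X) (f : X -> T Y), bind (ret x) f = f x;
  bind_ret_r : forall (X : Type) (m : T X), bind m (@ret X) = m;
  bind_assoc : forall (X Y Z : Type) (m : T X) (f : X -> T Y) (g : Y -> T Z),
      bind (bind m f) g = bind m (fun x => bind (f x) g)
}.

Arguments ret {m0 X} x.
Arguments bind {m0 X Y} _ _.

Definition fmap {M : Monad} (X Y : Type) (f : X -> Y) (m : M X) : M Y :=
  bind m (fun x => ret (f x)).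

Definition formal_presentation {M : Monad} (X : Type) (n : arity)
    (mu : M X) (Gamma : M (idx n)) (x : idx n -> X) : Prop :=
  mu = fmap x Gamma.

Definition operation (M : Monad) (n : arity) : Type :=
  forall Z : Type, (idx n -> M Z) -> M Z.

Definition op_of_generic {M : Monad} (n : arity) (G : M (idx n)) : operation M n :=
  fun Z nu => bind G nu.

Definition generic_of_op {M : Monad} (n : arity) (g : operation M n) : M (idx n) :=
  g (idx n) (fun i => ret i).

(** Sequential composition of Γ ∈ T([n]) with Δ_i ∈ T([m_i]), where [l] is
    identified with the disjoint union of the [m_i] via [inj] (the map
    ∐_i [m_i] -> [l] of the fixed bijection). *)
Definition seq_comp {M : Monad} (n : arity) (m : idx n -> arity) (l : arity)
    (inj : {i : idx n & idx (m i)} -> idx l)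
    (Gamma : M (idx n)) (Delta : forall i, M (idx (m i))) : M (idx l) :=
  @generic_of_op M l (fun Z (nu : idx l -> M Z) =>
    @op_of_generic M n Gamma Z
      (fun i => @op_of_generic M (m i) (Delta i) Z (fun j => nu (inj (existT _ i j))))).

(** Writing μ as T(x)(Γ) and using associativity of the Kleisli extension,
    μ >>= f = Γ >>= (f ∘ x) = Γ >>= (i ↦ T(y_i)(Δ_i)).  The sequential
    composition Ξ is Γ >>= (i ↦ T(ι_i)(Δ_i)) with ι_i the i-th coprojection
    into [l], so T(y ∘ π)(Ξ) = Γ >>= (i ↦ T(y ∘ π ∘ ι_i)(Δ_i)), and π ∘ ι_i
    is the identity on the i-th summand. *)
From Stdlib Require Import FunctionalExtensionality.

Section KleisliCalculus.

Variable M : Monad.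

Lemma bind_ext (A B : Type) (m : M A) (f g : A -> M B) :
  (forall a, f a = g a) -> bind m f = bind m g.
Proof.
  intros Hfg. f_equal. now apply functional_extensionality.
Qed.

Lemma bind_fmap (A B C : Type) (g : A -> B) (m : M A) (f : B -> M C) :
  bind (fmap g m) f = bind m (fun a => f (g a)).
Proof.
  unfold fmap. rewrite bind_assoc.
  apply bind_ext. intros a. apply bind_ret_l.
Qed.

Lemma fmap_bind (A B C : Type) (m : M A) (f : A -> M B) (h : B -> C) :
  fmap h (bind m f) = bind m (fun a => fmap h (f a)).
Proof.
  unfold fmap. apply bind_assoc.
Qed.

Lemma fmap_comp (A B C : Type) (g : A -> B) (h : B -> C) (m : M A) :
  fmap h (fmap g m) = fmap (fun a => h (g a)) m.
Proof.
  apply bind_fmap.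
Qed.

Lemma fmap_ext (A B : Type) (g h : A -> B) (m : M A) :
  (forall a, g a = h a) -> fmap g m = fmap h m.
Proof.
  intros Hgh. apply bind_ext. intros a. now rewrite Hgh.
Qed.

End KleisliCalculus.

Lemma seq_comp_bind (M : Monad) (n : arity) (m : idx n -> arity) (l : arity)
    (inj : {i : idx n & idx (m i)} -> idx l)
    (Gamma : M (idx n)) (Delta : forall i, M (idx (m i))) :
  seq_comp n m l inj Gamma Delta
  = bind Gamma (fun i => fmap (fun j => inj (existT _ i j)) (Delta i)).
Proof.
  reflexivity.
Qed.

Lemma bind_presentation {M : Monad} {X Y : Type} {n : arity}
    {mu : M X} {Gamma : M (idx n)} {x : idx n -> X} {f : X -> M Y}
    {m : idx n -> arity} {Delta : forall i, M (idx (m i))}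
    {y : forall i, idx (m i) -> Y} :
  formal_presentation n mu Gamma x ->
  (forall i, formal_presentation (m i) (f (x i)) (Delta i) (y i)) ->
  bind mu f = bind Gamma (fun i => fmap (y i) (Delta i)).
Proof.
  intros -> Hf. rewrite bind_fmap.
  apply bind_ext. exact Hf.
Qed.

Lemma fmap_seq_comp (M : Monad) (n : arity) (m : idx n -> arity) (l : arity)
    (inj : {i : idx n & idx (m i)} -> idx l)
    (proj : idx l -> {i : idx n & idx (m i)})
    (Gamma : M (idx n)) (Delta : forall i, M (idx (m i)))
    (Y : Type) (y : forall i, idx (m i) -> Y) :
  (forall p, proj (inj p) = p) ->
  fmap (fun k => y (projT1 (proj k)) (projT2 (proj k))) (seq_comp n m l inj Gamma Delta)
  = bind Gamma (fun i => fmap (y i) (Delta i)).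
Proof.
  intros Hproj_inj.
  rewrite seq_comp_bind, fmap_bind.
  apply bind_ext. intros i.
  rewrite fmap_comp.
  apply fmap_ext. intros j. now rewrite Hproj_inj.
Qed.

Theorem theorem5p10 (M : Monad) (X Y : Type) (n : arity)
    (mu : M X) (Gamma : M (idx n)) (x : idx n -> X)
    (f : X -> M Y)
    (m : idx n -> arity) (Delta : forall i : idx n, M (idx (m i)))
    (y : forall i : idx n, idx (m i) -> Y)
    (l : arity)
    (inj : {i : idx n & idx (m i)} -> idx l)
    (proj : idx l -> {i : idx n & idx (m i)}) :
  (forall p, proj (inj p) = p) ->
  (forall k, inj (proj k) = k) ->
  @formal_presentation M X n mu Gamma x ->
  (forall i : idx n, @formal_presentation M Y (m i) (f (x i)) (Delta i) (y i)) ->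
  @formal_presentation M Y l (bind mu f) (@seq_comp M n m l inj Gamma Delta)
    (fun k : idx l => y (projT1 (proj k)) (projT2 (proj k))).
Proof.
  intros Hproj_inj _ Hmu Hf.
  unfold formal_presentation.
  rewrite fmap_seq_comp by exact Hproj_inj.
  exact (bind_presentation Hmu Hf).
Qed.
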